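(* Let $G$ be a finite group. (1) The Fitting subgroup $\mathrm{Fit}(G)$ is atomically universally definable. (2) If $N\le H\le G$ with $N\trianglelefteq G$, $H/N$ atomically universally definable in $G/N$ and $N$ atomically universally definable in $G$, then $H$ is atomically universally definable in $G$. (3) All terms $\mathcal{U}_iG$ of the upper Fitting series are atomically universally definable. (4) If $H\le G$ is inducible, then the centralizer $C_G(H)=\{g\in G: gh=hg\text{ for all }h\in H\}$ is atomically universally definable.
   Context: An expression over $G$ is a word over $G\cup\mathcal{X}\cup\mathcal{X}^{-1}$ ($\mathcal{X}$ variables, $\mathcal{X}^{-1}$ formal inverses), evaluated under assignments $\sigma:\mathcal{X}\to G$ extended by $\sigma(X^{-1})=\sigma(X)^{-1}$, $\sigma(g)=g$. A subset $S\subseteq G$ is inducible if there is an expression $\alpha$ with $S=\{\sigma(\alpha):\sigma:\mathcal{X}\to G\}$. A subset $S\subseteq G$ is atomically universally definable if there is an expression $\alpha$ over variables $\{X,Y_1,Y_2,\dots\}$ such that $S=\{g\in G: (\sigma\cup[X\mapsto g])(\alpha)=1\text{ for all }\sigma:\{Y_1,Y_2,\dots\}\to G\}$. $\mathrm{Fit}(G)$ is the largest nilpotent normal subgroup of $G$; the upper Fitting series is $\mathcal{U}_0G=1$, $\mathcal{U}_{i+1}G/\mathcal{U}_iG=\mathrm{Fit}(G/\mathcal{U}_iG)$. *)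

From mathcomp Require Import all_boot all_fingroup all_solvable.
Set Implicit Arguments. Unset Strict Implicit. Unset Printing Implicit Defensive.
Import GroupScope.
Local Open Scope group_scope.

Inductive letter (T : Type) :=
| LConst of T
| LVar of nat
| LVarInv of nat.

Definition expr (T : Type) := seq (letter T).

Section Eval.
Variable gT : finGroupType.

Definition eval_letter (s : nat -> gT) (l : letter gT) : gT :=
  match l with
  | LConst g => g
  | LVar i => s i
  | LVarInv i => (s i)^-1
  end.

Definition eval (s : nat -> gT) (a : expr gT) : gT :=
  foldr (fun l acc => eval_letter s l * acc) 1 a.

Definition expr_over (G : {set gT}) (a : expr gT) : Prop :=
  foldr (fun l P => (match l with LConst g => g \in G | _ => True end) /\ P) True a.

Definition assign_in (G : {set gT}) (s : nat -> gT) : Prop := forall i, s i \in G.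

(* variable 0 plays the role of X; variables 1,2,... play Y_1, Y_2, ... *)
Definition upd0 (s : nat -> gT) (g : gT) : nat -> gT :=
  fun i => if i == 0%N then g else s i.

Definition inducible (G S : {set gT}) : Prop :=
  exists a : expr gT, expr_over G a /\
    forall g, g \in S <-> exists s, assign_in G s /\ eval s a = g.

Definition aud (G S : {set gT}) : Prop :=
  exists a : expr gT, expr_over G a /\
    forall g, g \in S <->
      (g \in G /\ forall s, assign_in G s -> eval (upd0 s g) a = 1).

Fixpoint upper_fitting (G : {set gT}) (n : nat) : {set gT} :=
  match n with
  | 0 => 1
  | n'.+1 => coset (upper_fitting G n') @*^-1 'F(G / upper_fitting G n')
  end.
End Eval.

(* Definability by a law composes under substitution of words: if N is defined
   in G by c(X, Z) = 1 and a(X, Y) is a word over G, then the set of g with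
   a(g, Y) in N for all Y is defined by c(a(X, Y), Z) = 1, with Y and Z on
   disjoint variables. Lifting a defining word of H/N to G and taking the
   preimage of N gives (2), and (3) follows from (1) and (2) by induction.
   For (1), if F(G) has nilpotency class c then every element g of F(G)
   satisfies [g^Y1, ..., g^Y(c+1)] = 1; conversely this law forces the normal
   closure of g to be nilpotent: if all left-normed commutators of weight c+1
   in elements of S vanish, those of weight c are central in <<S>>, and one
   concludes by induction modulo the centre. For (4), if A is induced by the
   word b then C_G(A) is defined by [X, b(Y)] = 1. *)
From mathcomp Require Import all_boot all_fingroup all_solvable.
Set Implicit Arguments. Unset Strict Implicit. Unset Printing Implicit Defensive.
Import GroupScope.
Local Open Scope group_scope.

Section Words.
Variable gT : finGroupType.
Implicit Types (G : {group gT}) (s : nat -> gT) (a b : expr gT).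

Definition wvar i : expr gT := [:: LVar gT i].

Definition inv_letter (l : letter gT) : letter gT :=
  match l with
  | LConst g => LConst g^-1
  | LVar i => LVarInv gT i
  | LVarInv i => LVar gT i
  end.

Definition winv a : expr gT := rev (map inv_letter a).

Definition wconj a b : expr gT := winv b ++ a ++ b.

Definition wcomm a b : expr gT := winv a ++ winv b ++ a ++ b.

Definition wsubst (sigma : nat -> expr gT) a : expr gT :=
  flatten (map (fun l => match l with
                         | LConst g => [:: LConst g]
                         | LVar i => sigma i
                         | LVarInv i => winv (sigma i)
                         end) a).

Definition wrename (r : nat -> nat) a : expr gT := wsubst (wvar \o r) a.

Lemma eval_wvar s i : eval s (wvar i) = s i.
Proof. by rewrite /= mulg1. Qed.

Lemma eval_cat s a b : eval s (a ++ b) = eval s a * eval s b.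
Proof. by elim: a => [|l a IHa] /=; rewrite ?mul1g // IHa mulgA. Qed.

Lemma eval_winv s a : eval s (winv a) = (eval s a)^-1.
Proof.
elim: a => [|l a IHa]; first by rewrite invg1.
rewrite /winv map_cons rev_cons -cats1 eval_cat IHa /= mulg1 invMg.
by case: l => [g|i|i] /=; rewrite ?invgK.
Qed.

Lemma eval_wconj s a b : eval s (wconj a b) = eval s a ^ eval s b.
Proof. by rewrite !eval_cat eval_winv /conjg mulgA. Qed.

Lemma eval_wcomm s a b : eval s (wcomm a b) = [~ eval s a, eval s b].
Proof. by rewrite !eval_cat !eval_winv /commg /conjg !mulgA. Qed.

Lemma eq_eval s1 s2 a : s1 =1 s2 -> eval s1 a = eval s2 a.
Proof. by move=> eq_s; elim: a => [|[g|i|i] a IHa] //=; rewrite IHa ?eq_s. Qed.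

Lemma eval_wsubst s sigma a :
  eval s (wsubst sigma a) = eval (fun i => eval s (sigma i)) a.
Proof.
elim: a => [|l a IHa] //=; rewrite /wsubst map_cons /= eval_cat -/(wsubst _ _) IHa.
by case: l => [g|i|i] /=; rewrite ?eval_winv ?mulg1.
Qed.

Lemma eval_wrename s r a : eval s (wrename r a) = eval (s \o r) a.
Proof. by rewrite eval_wsubst; apply: eq_eval => i; apply: eval_wvar. Qed.

Lemma expr_over_cat (A : {set gT}) a b :
  expr_over A a -> expr_over A b -> expr_over A (a ++ b).
Proof. by elim: a => [|l a IHa] //= [Al Aa] Ab; split; last exact: IHa. Qed.

Lemma expr_over_winv G a : expr_over G a -> expr_over G (winv a).
Proof.
elim: a => [|l a IHa] //= [Gl Ga].
rewrite /winv map_cons rev_cons -cats1; apply: expr_over_cat; first exact: IHa.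
by case: l Gl => //= g Gg; rewrite groupV.
Qed.

Lemma expr_over_wconj G a b :
  expr_over G a -> expr_over G b -> expr_over G (wconj a b).
Proof. by move=> Ga Gb; do !apply: expr_over_cat => //; apply: expr_over_winv. Qed.

Lemma expr_over_wcomm G a b :
  expr_over G a -> expr_over G b -> expr_over G (wcomm a b).
Proof. by move=> Ga Gb; do !apply: expr_over_cat => //; apply: expr_over_winv. Qed.

Lemma expr_over_wsubst G sigma a :
  (forall i, expr_over G (sigma i)) -> expr_over G a -> expr_over G (wsubst sigma a).
Proof.
move=> Gsigma; elim: a => [|l a IHa] //= [Gl Ga].
rewrite /wsubst map_cons /= -/(wsubst _ _); apply: expr_over_cat; last exact: IHa.
by case: l Gl => //= *; apply: expr_over_winv.
Qed.

Lemma expr_over_wrename G r a : expr_over G a -> expr_over G (wrename r a).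
Proof. by move=> Ga; apply: expr_over_wsubst. Qed.

Lemma assign_in_upd0 (A : {set gT}) s g :
  assign_in A s -> g \in A -> assign_in A (upd0 s g).
Proof. by move=> As Ag i; rewrite /upd0; case: eqP. Qed.

Lemma mem_eval G s a : expr_over G a -> assign_in G s -> eval s a \in G.
Proof.
move=> + Gs; elim: a => [|[g|i|i] a IHa] //= [Gl /IHa Ga]; rewrite groupM //.
by rewrite groupV.
Qed.

End Words.

Definition map_letter (aT rT : Type) (f : aT -> rT) (l : letter aT) : letter rT :=
  match l with
  | LConst x => LConst (f x)
  | LVar i => LVar rT i
  | LVarInv i => LVarInv rT i
  end.

Section MorphicImages.
Variables aT rT : finGroupType.

Lemma morph_eval (D G : {group aT}) (f : {morphism D >-> rT}) s (a : expr aT) :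
    G \subset D -> expr_over G a -> assign_in G s ->
  f (eval s a) = eval (f \o s) (map (map_letter f) a).
Proof.
move=> sGD + Gs; have Ds i := subsetP sGD _ (Gs i).
elim: a => [_|l a IHa /= [Gl Ga]]; first exact: morph1.
have Dl : eval_letter s l \in D.
  by case: l Gl => /= [g /(subsetP sGD)|i _|i _]; rewrite ?groupV.
rewrite morphM ?IHa //; last exact: subsetP sGD _ (mem_eval Ga Gs).
by case: l {Gl Dl} => //= i; rewrite morphV.
Qed.

Lemma expr_over_imset (h : aT -> rT) (A : {set aT}) (a : expr rT) :
  expr_over (h @: A) a -> exists2 b, expr_over A b & map (map_letter h) b = a.
Proof.
elim: a => [_|l a IHa /= [hAl /IHa [b Ab <-]]]; first by exists [::].
case: l hAl => [_ /imsetP [x Ax ->]|i _|i _].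
- by exists (LConst x :: b).
- by exists (LVar aT i :: b).
- by exists (LVarInv aT i :: b).
Qed.



Lemma assign_in_imset (h : aT -> rT) (A : {set aT}) (t : nat -> rT) :
  assign_in (h @: A) t -> exists2 s, assign_in A s & h \o s =1 t.
Proof.
move=> hAt; have lift i : {x | (x \in A) && (h x == t i)}.
  by apply: sigW; have /imsetP [x Ax ->] := hAt i; exists x; rewrite Ax eqxx.
by exists (fun i => sval (lift i)) => i /=; case: (lift i) => x /= /andP [? /eqP].
Qed.

End MorphicImages.

Section Definability.
Variable gT : finGroupType.
Implicit Types (G H N : {group gT}) (s : nat -> gT).

Lemma aud_word_preimage G (N S : {set gT}) (a : expr gT) :
    expr_over G a -> aud G N ->
    (forall g, g \in S <->
       g \in G /\ forall s, assign_in G s -> eval (upd0 s g) a \in N) ->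
  aud G S.
Proof.
move=> Ga [c [Gc defN]] defS.
(* [a] reads the even variables and [c] the odd ones, so that the parameters
   of [a] and of [c] can be chosen independently. *)
pose sigma i := if i is j.+1 then wvar gT j.*2.+1 else wrename double a.
have eval_sigma s g : eval (upd0 s g) (wsubst sigma c) =
    eval (upd0 (fun i => s i.*2.-1) (eval (upd0 (fun i => s i.*2) g) a)) c.
  rewrite eval_wsubst; apply: eq_eval => [[|j]] /=.
    by rewrite eval_wrename; apply: eq_eval => [[|k]] //=; rewrite /upd0 double_eq0.
  by rewrite mulg1 /upd0 doubleS.
exists (wsubst sigma c); split.
  by apply: expr_over_wsubst => // [[|j]] //; apply: expr_over_wrename.
move=> g; split=> [/defS [Gg inN] | [Gg vanish]].
  split=> // s Gs; rewrite eval_sigma.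
  by have [_ -> //] := proj1 (defN _) (inN _ (fun i => Gs i.*2)).
apply/defS; split=> // s Gs; apply/defN; split=> [|z Gz].
  by apply: mem_eval => //; apply: assign_in_upd0.
pose t k := if odd k then z k.+1./2 else s k./2.
have Gt : assign_in G t by move=> k; rewrite /t; case: odd.
rewrite -(vanish t Gt) eval_sigma; apply: eq_eval => [[|i]] /=; last first.
  by rewrite /upd0 /t doubleS /= odd_double /= doubleK.
by rewrite /upd0 /=; apply: eq_eval => -[|k] //=; rewrite /t odd_double doubleK.
Qed.

Lemma aud_quotient G H N :
    N \subset H -> H \subset G -> N <| G ->
  aud (G / N) (H / N) -> aud G N -> aud G H.
Proof.
move=> sNH sHG nsNG [a [GNa defHN]] audN; have nNG := normal_norm nsNG.
have quoGE : G / N = coset N @: G by rewrite /quotient morphimEsub.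
have [b Gb def_a] : exists2 b, expr_over G b & map (map_letter (coset N)) b = a.
  by apply: expr_over_imset; rewrite -quoGE.
have eval_b s g : assign_in G s -> g \in G ->
    coset N (eval (upd0 s g) b) = eval (upd0 (coset N \o s) (coset N g)) a.
  move=> Gs Gg; rewrite -def_a.
  move: (morph_eval (coset_morphism N) nNG Gb (assign_in_upd0 Gs Gg)) => /= ->.
  by apply: eq_eval => -[|i].
apply: (aud_word_preimage Gb audN) => g; split=> [Hg | [Gg inN]].
  have Gg := subsetP sHG g Hg; split=> // s Gs.
  apply: coset_idr; first exact: subsetP nNG _ (mem_eval Gb (assign_in_upd0 Gs Gg)).
  rewrite eval_b //; apply: (proj2 (proj1 (defHN _) (mem_quotient N Hg))).
  by move=> i; apply: mem_quotient.
rewrite -(quotientGK (normalS sNH sHG nsNG)); apply/morphpreP.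
split; first exact: subsetP nNG g Gg.
apply/defHN; split=> [|t]; first exact: mem_quotient.
rewrite quoGE => /assign_in_imset [s Gs def_t].
rewrite -(coset_id (inN s Gs)) eval_b //.
by apply: eq_eval => -[|i] //; rewrite /upd0 /= -def_t.
Qed.

Lemma aud_centraliser G (A : {set gT}) : inducible G A -> aud G 'C_G(A).
Proof.
move=> [b [Gb defA]].
exists (wcomm (wvar gT 0) (wrename succn b)); split.
  by apply: expr_over_wcomm => //; apply: expr_over_wrename.
have eval_comm s g :
    eval (upd0 s g) (wcomm (wvar gT 0) (wrename succn b)) = [~ g, eval (s \o succn) b].
  by rewrite eval_wcomm eval_wvar eval_wrename.
move=> g; split=> [/setIP [Gg cAg] | [Gg vanish]].
  split=> // s Gs; rewrite eval_comm; apply/eqP/commgP/(centP cAg)/defA.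
  by exists (s \o succn); split=> // i; apply: Gs.
apply/setIP; split=> //; apply/centP => _ /defA [s [Gs <-]]; apply/commgP/eqP.
have Gs' : assign_in G (upd0 (s \o predn) 1).
  by apply: assign_in_upd0 => // i; apply: Gs.
by rewrite -(vanish _ Gs') eval_comm.
Qed.

End Definability.

Section LeftNormedCommutators.
Variable gT : finGroupType.
Implicit Types (x y : nat -> gT) (S : {set gT}).

Fixpoint lcomm x n : gT := if n is m.+1 then [~ lcomm x m, x m.+1] else x 0.

Lemma eq_lcomm x y n : (forall i, i <= n -> x i = y i) -> lcomm x n = lcomm y n.
Proof.
elim: n => [|n IHn] eq_xy /=; first exact: eq_xy.
by rewrite IHn ?eq_xy // => i le_in; rewrite eq_xy ?leqW.
Qed.

Lemma mem_lcomm_lcn S x n : assign_in S x -> lcomm x n \in 'L_n.+1(S).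
Proof.
move=> Sx; elim: n => [|n IHn] /=; first by rewrite lcn1.
by rewrite lcnSn mem_commg.
Qed.

Lemma mem_lcomm (G : {group gT}) x n : assign_in G x -> lcomm x n \in G.
Proof. by move=> Gx; apply: subsetP (lcn_sub n.+1 G) _ (mem_lcomm_lcn n Gx). Qed.

Lemma lcomm_center S n :
    (forall x, assign_in S x -> lcomm x n.+1 = 1) ->
  forall x, assign_in S x -> lcomm x n \in 'Z(<<S>>).
Proof.
move=> vanish x Sx; have sSG : S \subset <<S>> := subset_gen S.
apply/subcentP; split.
  by apply: (@mem_lcomm <<S>>%G) => i; apply: subsetP sSG _ (Sx i).
apply/centP; rewrite cent_gen; apply/centP => y Sy.
pose xy i := if i == n.+1 then y else x i.
have Sxy : assign_in S xy by move=> i; rewrite /xy; case: eqP.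
have : [~ lcomm xy n, xy n.+1] = 1 := vanish xy Sxy.
rewrite (@eq_lcomm xy x) => [|i le_in]; last by rewrite /xy ltn_eqF.
by rewrite /xy eqxx => /eqP/commgP.
Qed.

End LeftNormedCommutators.

Lemma morph_lcomm (aT rT : finGroupType) (D : {group aT}) (f : {morphism D >-> rT})
    (x : nat -> aT) n :
  assign_in D x -> f (lcomm x n) = lcomm (f \o x) n.
Proof.
move=> Dx; elim: n => [|n IHn] //=.
by rewrite morphR ?IHn //; apply: mem_lcomm.
Qed.

Lemma nilpotent_gen_lcomm n (gT : finGroupType) (S : {set gT}) :
  (forall x, assign_in S x -> lcomm x n = 1) -> nilpotent <<S>>.
Proof.
elim: n gT S => [|n IHn] gT S vanish.
  apply: nilpotentS (nilpotent1 gT); rewrite gen_subG.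
  by apply/subsetP => g Sg; rewrite inE -(vanish (fun=> g)).
set Z := 'Z(<<S>>).
have nZS : S \subset 'N(Z).
  exact: subset_trans (subset_gen S) (normal_norm (center_normal _)).
rewrite -quotient_center_nil quotient_gen //; apply: IHn => x'.
rewrite /quotient morphimEsub // => /assign_in_imset [x Sx def_x'].
have nZx : assign_in 'N(Z) x by move=> i; apply: subsetP nZS _ (Sx i).
rewrite -(@eq_lcomm _ (coset Z \o x)) => [|i _]; last exact: def_x'.
by rewrite -(morph_lcomm (coset_morphism Z)) //; apply: coset_id; apply: lcomm_center.
Qed.

Section Fitting.
Variable gT : finGroupType.
Implicit Types (G : {group gT}) (s : nat -> gT).

Lemma Fitting_lcomm_class G g n :
  g \in G -> (forall x, assign_in (g ^: G) x -> lcomm x n = 1) -> g \in 'F(G).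
Proof.
move=> Gg vanish; have nsClG : <<g ^: G>> <| G.
  by rewrite /normal gen_subG class_subG // (subset_trans (class_norm g G)) ?norm_gen.
apply: subsetP (Fitting_max nsClG (nilpotent_gen_lcomm vanish)) _ _.
exact: mem_gen (class_refl G g).
Qed.

Fixpoint wfit n : expr gT :=
  if n is m.+1 then wcomm (wfit m) (wconj (wvar gT 0) (wvar gT m.+2))
  else wconj (wvar gT 0) (wvar gT 1).

Lemma eval_wfit s n : eval s (wfit n) = lcomm (fun i => s 0 ^ s i.+1) n.
Proof.
elim: n => [|n IHn]; first by rewrite eval_wconj !eval_wvar.
by rewrite [wfit _]/= eval_wcomm IHn eval_wconj !eval_wvar.
Qed.

Lemma expr_over_wfit G n : expr_over G (wfit n).
Proof.
elim: n => [|n IHn]; first exact: expr_over_wconj.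
by apply: expr_over_wcomm => //; apply: expr_over_wconj.
Qed.

Lemma aud_Fitting G : aud G 'F(G).
Proof.
have /lcnP [c Lc_trivial] := Fitting_nil G.
exists (wfit c); split=> [|g]; first exact: expr_over_wfit.
split=> [Fg | [Gg vanish]].
  split=> [|s Gs]; first exact: subsetP (Fitting_sub G) g Fg.
  rewrite eval_wfit; apply/set1gP; rewrite -Lc_trivial; apply: mem_lcomm_lcn => i /=.
  by rewrite memJ_norm // (subsetP (normal_norm (Fitting_normal G))) ?Gs.
apply: (Fitting_lcomm_class (n := c) Gg) => x /assign_in_imset [y Gy def_x].
have Gy1 : assign_in G (upd0 (y \o predn) 1).
  by apply: assign_in_upd0 => // i; apply: Gy.
rewrite -(vanish _ Gy1) eval_wfit; apply: eq_lcomm => i _.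
by rewrite -def_x.
Qed.

End Fitting.

Section UpperFitting.
Variable gT : finGroupType.
Implicit Types G : {group gT}.

Lemma aud1 G : aud G 1.
Proof.
exists (wvar gT 0); split=> // g; split=> [/set1gP -> | [_ vanish]].
  by split=> // s _; rewrite eval_wvar.
by apply/set1gP; rewrite -(vanish (fun=> 1)) ?eval_wvar.
Qed.

Fixpoint upper_fitting_group G n : {group gT} :=
  if n is m.+1 then
    (coset (upper_fitting_group G m) @*^-1 'F(G / upper_fitting_group G m))%G
  else 1%G.

Lemma upper_fittingE G n : upper_fitting G n = upper_fitting_group G n.
Proof. by elim: n => //= n ->. Qed.

Lemma upper_fitting_normal G n : upper_fitting_group G n <| G.
Proof.
elim: n => [|n IHn] /=; first exact: normal1.
by rewrite -{2}(quotientGK IHn) cosetpre_normal Fitting_normal.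
Qed.

Lemma aud_upper_fitting G n : aud G (upper_fitting G n).
Proof.
rewrite upper_fittingE; elim: n => [|n IHn] /=; first exact: aud1.
set N := upper_fitting_group G n; have nsNG : N <| G := upper_fitting_normal G n.
apply: aud_quotient IHn.
- by rewrite -{1}(ker_coset N) ker_sub_pre.
- by rewrite -(quotientGK nsNG) morphpreS ?Fitting_sub.
- exact: nsNG.
- by rewrite cosetpreK; apply: aud_Fitting.
Qed.

End UpperFitting.

Theorem lemma2p6 :
  (forall (gT : finGroupType) (G : {group gT}), aud G 'F(G)) /\
  (forall (gT : finGroupType) (G H N : {group gT}),
      N \subset H -> H \subset G -> N <| G ->
      aud (G / N) (H / N) -> aud G N -> aud G H) /\
  (forall (gT : finGroupType) (G : {group gT}) (i : nat),
      aud G (upper_fitting G i)) /\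
  (forall (gT : finGroupType) (G H : {group gT}),
      H \subset G -> inducible G H -> aud G 'C_G(H)).
Proof.
split; first exact: aud_Fitting.
split; first exact: aud_quotient.
split; first exact: aud_upper_fitting.
by move=> gT G H _; apply: aud_centraliser.
Qed.
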